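(* Let $n\ge 2$ and let $x\in\mathbb{C}^{n\times n}$ be generic (in the sense defined in the context). Fix $1\le m\le n-1$, let $\Lambda_m=\operatorname{diag}(\mu^{(m)}_1,\ldots,\mu^{(m)}_m)$ be a diagonal matrix whose diagonal entries are the eigenvalues of $x_m$ in some fixed order, let $g_m\in\mathrm{GL}(m)$ be the unique matrix with $x_m=g_m\Lambda_m g_m^{-1}$ whose last row consists entirely of ones, and define $b_m,c_m\in\mathbb{C}^m$ and $\delta_{m+1}\in\mathbb{C}$ by \[ \begin{pmatrix} g_m^{-1}&0\\0&1\end{pmatrix} x_{m+1}\begin{pmatrix} g_m&0\\0&1\end{pmatrix}=\begin{pmatrix}\Lambda_m & c_m\\ b_m^{T} & \delta_{m+1}\end{pmatrix}. \] Let $P_k(\lambda)=\det(\lambda I_k-x_k)$. Then \[ \operatorname{diag}(b_m)\operatorname{diag}(c_m)=-P_{m+1}(\Lambda_m)\bigl(P_m'(\Lambda_m)\bigr)^{-1}. \] In particular $\operatorname{diag}(b_m)\operatorname{diag}(c_m)$ is invertible.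
   Context: For a square matrix $x$, $x_k$ denotes its leading principal $k\times k$ submatrix and $E(x_k)$ the multiset of its eigenvalues. A matrix $x\in\mathbb{C}^{n\times n}$ is called generic if (G1) for every $1\le k\le n$ the eigenvalues of $x_k$ are distinct, and (G2) for every $1\le k\le n-1$, $E(x_k)\cap E(x_{k+1})=\varnothing$. Under these conditions $x_m$ is diagonalizable and every eigenvector of $x_m$ has nonzero last entry, so the normalized $g_m$ (last row all ones) exists and is unique. For $v\in\mathbb{C}^m$, $\operatorname{diag}(v)$ is the diagonal matrix with diagonal $v$; for a polynomial $P$ and diagonal $\Lambda_m$, $P(\Lambda_m)$ is the diagonal matrix with entries $P(\mu^{(m)}_i)$. *)

From HB Require Import structures.
From mathcomp Require Import all_boot all_order all_algebra.
Set Implicit Arguments. Unset Strict Implicit. Unset Printing Implicit Defensive.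
Import Order.TTheory GRing.Theory Num.Theory.
Local Open Scope ring_scope.

(* Leading principal k x k submatrix x_k of x : 'M_n (meaningful for k <= n). *)
Definition lpm (C : fieldType) (n k : nat) (x : 'M[C]_n) : 'M[C]_k :=
  \matrix_(i < k, j < k)
    match @insub nat (fun t => (t < n)%N) 'I_n (val i),
          @insub nat (fun t => (t < n)%N) 'I_n (val j) with
    | Some i', Some j' => x i' j'
    | _, _ => 0
    end.

Definition distinct_eigs (C : fieldType) (k : nat) (A : 'M[C]_k) : Prop :=
  exists s : seq C, uniq s /\ char_poly A = \prod_(a <- s) ('X - a%:P).

Definition generic (C : fieldType) (n : nat) (x : 'M[C]_n) : Prop :=
  (forall k, (1 <= k <= n)%N -> distinct_eigs (lpm k x)) /\
  (forall k, (1 <= k <= n.-1)%N ->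
     forall a : C, eigenvalue (lpm k x) a -> ~~ eigenvalue (lpm k.+1 x) a).

From HB Require Import structures.
From mathcomp Require Import all_boot all_order all_algebra.
Set Implicit Arguments. Unset Strict Implicit. Unset Printing Implicit Defensive.
Import Order.TTheory GRing.Theory Num.Theory.
Local Open Scope ring_scope.

(* Conjugating x_(m+1) by diag(g_m, 1) yields the arrowhead matrix
   [[Lambda_m, c_m], [b_m^T, delta]], which has the same characteristic
   polynomial; expanding its determinant gives
     P_(m+1) = P_m (X - delta) - \sum_i b_i c_i \prod_(j != i) (X - mu_j).
   At X = mu_i every term but one vanishes, so P_(m+1)(mu_i) = - b_i c_i P_m'(mu_i).
   (G1) makes P_m'(mu_i) nonzero and (G2) makes P_(m+1)(mu_i) nonzero. *)

Lemma char_poly_conj (R : comNzRingType) k (P Q A : 'M[R]_k) :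
  P *m Q = 1%:M -> char_poly (P *m A *m Q) = char_poly A.
Proof.
move=> PQ1; rewrite /char_poly /char_poly_mx !map_mxM.
have PQC1 : map_mx polyC P *m map_mx polyC Q = 1%:M by rewrite -map_mxM PQ1 map_mx1.
have XC : ('X%:M : 'M[{poly R}]_k) = map_mx polyC P *m 'X%:M *m map_mx polyC Q.
  by rewrite scalar_mxC -mulmxA PQC1 mulmx1.
by rewrite {1}XC -mulmxBl -mulmxBr !det_mulmx mulrAC -det_mulmx PQC1 det1 mul1r.
Qed.

Lemma unitmx_diag (F : fieldType) k (d : 'rV[F]_k) :
  (forall i, d 0 i != 0) -> diag_mx d \in unitmx.
Proof. by move=> d_neq0; rewrite unitmxE det_diag unitfE; apply/prodf_neq0. Qed.

Lemma invmx_diag (F : fieldType) k (d : 'rV[F]_k) :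
  (forall i, d 0 i != 0) -> invmx (diag_mx d) = diag_mx (\row_i (d 0 i)^-1).
Proof.
move=> d_neq0; have du := unitmx_diag d_neq0.
rewrite -[RHS](mulKmx du) mulmx_diag.
suff -> : \row_i (d 0 i * (\row_j (d 0 j)^-1) 0 i) = const_mx 1.
  by rewrite diag_const_mx mulmx1.
by apply/rowP => i; rewrite !mxE mulfV.
Qed.

Lemma horner_prod_XsubC_eq0 (R : comNzRingType) (I : finType) (F : I -> R) i :
  (\prod_j ('X - (F j)%:P)).[F i] = 0.
Proof. by rewrite horner_prod (bigD1 i) //= hornerXsubC subrr mul0r. Qed.

Lemma horner_deriv_prod_XsubC (R : comNzRingType) (I : finType) (F : I -> R) i :
  (\prod_j ('X - (F j)%:P))^`().[F i] = \prod_(j | j != i) (F i - F j).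
Proof.
rewrite (bigD1 i) //= derivM derivXsubC mul1r hornerD hornerM.
rewrite hornerXsubC subrr mul0r addr0 horner_prod.
by apply: eq_bigr => j _; rewrite hornerXsubC.
Qed.

(* Scaling by [\prod_i d_i] lets the last row be cleared with the cofactor
   row [- v diag(\prod_(j != i) d_j)] without inverting any [d_i]. *)
Lemma det_arrowhead (R : comNzRingType) k (d : 'rV[R]_k) (u : 'cV[R]_k)
    (v : 'rV[R]_k) (e : 'M[R]_1) :
  (\prod_i d 0 i) * \det (block_mx (diag_mx d) u v e) =
  (\prod_i d 0 i) * ((\prod_i d 0 i) * e 0 0
      - \sum_i v 0 i * u i 0 * \prod_(j | j != i) d 0 j).
Proof.
set p := \prod_i d 0 i; set d' := \row_i \prod_(j | j != i) d 0 j.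
have d'd : diag_mx d' *m diag_mx d = p%:M.
  apply/matrixP => i j; rewrite mul_mx_diag !mxE.
  have [->|nij] := eqVneq i j; last by rewrite mul0r.
  by rewrite mulr1n /p [in RHS](bigD1 j) //= mulrC.
set L := block_mx 1%:M 0 (- (v *m diag_mx d')) (p%:M : 'M[R]_1).
have detL : \det L = p by rewrite det_lblock det1 det_scalar1 mul1r.
rewrite -{1}detL -det_mulmx /L mulmx_block !mul1mx !mul0mx !addr0 ?add0r.
rewrite mulNmx -mulmxA d'd -scalar_mxC mul_mx_scalar mul_scalar_mx addNr.
rewrite det_ublock det_diag det_mx11 -/p; congr (_ * _).
rewrite !mxE addrC -sumrN; congr (_ + _).
apply: eq_bigr => i _; rewrite !mxE (bigD1 i) //= big1 ?addr0.
  by rewrite !mxE eqxx mulr1n mulNr mulrAC.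
by move=> j nji; rewrite !mxE (negbTE nji) mulr0n mulr0.
Qed.

Lemma char_poly_arrowhead (R : idomainType) k (d : 'rV[R]_k) (u : 'cV[R]_k)
    (v : 'rV[R]_k) (e : R) :
  char_poly (block_mx (diag_mx d) u v e%:M) =
  \prod_i ('X - (d 0 i)%:P) * ('X - e%:P)
  - \sum_i (v 0 i * u i 0)%:P * \prod_(j | j != i) ('X - (d 0 j)%:P).
Proof.
set dX := \row_i ('X - (d 0 i)%:P).
have dX_prod : \prod_i dX 0 i = \prod_i ('X - (d 0 i)%:P).
  by apply: eq_bigr => i _; rewrite mxE.
have dX_neq0 : \prod_i dX 0 i != 0 by rewrite dX_prod monic_neq0 ?monic_prod_XsubC.
apply: (mulfI dX_neq0); rewrite /char_poly.
have -> : char_poly_mx (block_mx (diag_mx d) u v e%:M) =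
    block_mx (diag_mx dX) (- map_mx polyC u) (- map_mx polyC v)
      (('X - e%:P)%:M : 'M_1).
  rewrite /char_poly_mx map_block_mx (scalar_mx_block k 1) opp_block_mx add_block_mx.
  congr block_mx; rewrite ?sub0r //.
    apply/matrixP => i j; rewrite !mxE.
    by case: (i == j); rewrite ?mulr1n ?mulr0n ?subr0.
  by apply/matrixP => i j; rewrite !mxE !ord1 eqxx !mulr1n.
rewrite det_arrowhead dX_prod mxE mulr1n; congr (_ * (_ - _)).
apply: eq_bigr => i _; rewrite !mxE mulrNN -polyCM; congr (_ * _).
by apply: eq_bigr => j _; rewrite mxE.
Qed.

Lemma horner_char_poly_arrowhead (R : idomainType) k (d : 'rV[R]_k)
    (u : 'cV[R]_k) (v : 'rV[R]_k) (e : R) i :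
  (char_poly (block_mx (diag_mx d) u v e%:M)).[d 0 i] =
  - (v 0 i * u i 0 * \prod_(j | j != i) (d 0 i - d 0 j)).
Proof.
rewrite char_poly_arrowhead hornerD hornerN hornerM horner_prod_XsubC_eq0.
rewrite mul0r sub0r horner_sum (bigD1 i) //= [X in _ + X]big1 ?addr0.
  rewrite hornerM hornerC horner_prod; congr (- (_ * _)).
  by apply: eq_bigr => j _; rewrite hornerXsubC.
move=> j nji; rewrite hornerM horner_prod (bigD1 i) 1?eq_sym //=.
by rewrite hornerXsubC subrr mul0r mulr0.
Qed.

Lemma distinct_eigs_inj (F : fieldType) k (A : 'M[F]_k) (d : 'rV[F]_k) :
  distinct_eigs A -> char_poly A = \prod_i ('X - (d 0 i)%:P) -> injective (d 0).
Proof.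
move=> [s [s_uniq ->]] sd; apply/injectiveP.
have ds : perm_eq [seq d 0 i | i <- enum 'I_k] s.
  by apply: prod_XsubC_eq; rewrite big_map big_enum.
by rewrite /injectiveb /dinjectiveb (perm_uniq ds).
Qed.

Theorem mainTheorem1 (C : numClosedFieldType) (n : nat) (x : 'M[C]_n)
  (m : nat) (mu : 'rV[C]_m) (g : 'M[C]_m) (b c : 'cV[C]_m) (delta : C) :
  (2 <= n)%N -> generic x -> (1 <= m)%N -> (m <= n.-1)%N ->
  char_poly (lpm m x) = \prod_(i < m) ('X - (mu 0 i)%:P) ->
  g \in unitmx ->
  lpm m x = g *m diag_mx mu *m invmx g ->
  (forall i j : 'I_m, val i = m.-1 -> g i j = 1) ->
  block_mx (invmx g) 0 0 (1%:M : 'M[C]_1) *m lpm (m + 1) x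
    *m block_mx g 0 0 (1%:M : 'M[C]_1)
  = block_mx (diag_mx mu) c b^T (delta%:M : 'M[C]_1) ->
  diag_mx b^T *m diag_mx c^T
  = - (diag_mx (\row_i (char_poly (lpm (m + 1) x)).[mu 0 i])
       *m invmx (diag_mx (\row_i ((char_poly (lpm m x))^`()).[mu 0 i])))
  /\ diag_mx b^T *m diag_mx c^T \in unitmx.
Proof.
move=> _ [G1 G2] m_gt0 m_lt Pm gu _ _ conj_x.
have mu_inj : injective (mu 0).
  by apply: distinct_eigs_inj Pm; apply: G1; rewrite m_gt0 (leq_trans m_lt) ?leq_pred.
have Pm1 : char_poly (lpm (m + 1) x)
    = char_poly (block_mx (diag_mx mu) c b^T (delta%:M : 'M[C]_1)).
  rewrite -conj_x char_poly_conj // mulmx_block !mul0mx !mulmx0 !addr0 add0r.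
  by rewrite mulVmx // mul1mx (scalar_mx_block m 1).
set q := fun i => \prod_(j | j != i) (mu 0 i - mu 0 j).
have q_neq0 i : q i != 0.
  by apply/prodf_neq0 => j; apply: contra => /eqP/subr0_eq/mu_inj ->.
have Pm'_mu i : ((char_poly (lpm m x))^`()).[mu 0 i] = q i.
  by rewrite Pm horner_deriv_prod_XsubC.
have Pm1_mu i : (char_poly (lpm (m + 1) x)).[mu 0 i] = - (b i 0 * c i 0 * q i).
  by rewrite Pm1 horner_char_poly_arrowhead mxE.
have Pm1_mu_neq0 i : (char_poly (lpm (m + 1) x)).[mu 0 i] != 0.
  have := G2 m (introT andP (conj m_gt0 m_lt)) (mu 0 i).
  rewrite !eigenvalue_root_char addn1; apply.
  by rewrite /root Pm horner_prod_XsubC_eq0.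
have bc_neq0 i : b i 0 * c i 0 != 0.
  by move: (Pm1_mu_neq0 i); rewrite Pm1_mu oppr_eq0 mulf_eq0 negb_or => /andP[].
rewrite mulmx_diag invmx_diag => [|i]; last by rewrite mxE Pm'_mu.
split; last by apply: unitmx_diag => i; rewrite !mxE.
rewrite mulmx_diag -raddfN /=; congr diag_mx; apply/rowP => i.
by rewrite !mxE Pm1_mu Pm'_mu mulNr opprK mulfK.
Qed.
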